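(* Let $G$ be a graph with $n$ nodes and graph Laplacian $\mathbf{L}$, and let $\mathbf{P},\mathbf{Q}\in\mathbb{R}^{n\times d}$. Then the matrix $[\mathbf{P}\ \mathbf{Q}]\in\mathbb{R}^{n\times 2d}$ (column-wise concatenation) is node- and adjacency-identifying if $\mathbf{L}=\mathbf{P}\mathbf{Q}^T$.
   Context: Graphs are finite, undirected, without self-loops and without isolated nodes; $\mathbf{L}=\mathbf{D}-\mathbf{A}(G)$ with $\mathbf{D}$ the degree matrix and $\mathbf{A}(G)$ the adjacency matrix; $d_k>0$ is a fixed constant. A matrix $\mathbf{R}\in\mathbb{R}^{n\times e}$ is node-identifying if there exist $\mathbf{W}^Q,\mathbf{W}^K$ (with $e$ rows) such that $\tilde{\mathbf{R}}=\frac{1}{\sqrt{d_k}}\mathbf{R}\mathbf{W}^Q(\mathbf{R}\mathbf{W}^K)^T$ satisfies $\tilde{\mathbf{R}}_{ij}=\max_k\tilde{\mathbf{R}}_{ik}\iff i=j$; adjacency-identifying if for some (possibly different) such matrices $\tilde{\mathbf{R}}_{ij}=\max_k\tilde{\mathbf{R}}_{ik}\iff\mathbf{A}(G)_{ij}=1$. *)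

From HB Require Import structures.
From mathcomp Require Import all_boot all_order all_algebra.
Set Implicit Arguments. Unset Strict Implicit. Unset Printing Implicit Defensive.
Import Order.TTheory GRing.Theory Num.Theory.
Local Open Scope ring_scope.

Definition simple_graph (n : nat) (e : rel 'I_n) : Prop :=
  [/\ symmetric e, irreflexive e & forall i : 'I_n, exists j, e i j].

Definition adjmx (R : pzRingType) (n : nat) (e : rel 'I_n) : 'M[R]_n :=
  \matrix_(i, j) (e i j)%:R.

Definition degmx (R : pzRingType) (n : nat) (e : rel 'I_n) : 'M[R]_n :=
  \matrix_(i, j) (if i == j then #|[set k | e i k]|%:R else 0).

Definition laplacian (R : pzRingType) (n : nat) (e : rel 'I_n) : 'M[R]_n :=
  degmx R e - adjmx R e.

Definition attn_scores (R : rcfType) (dk : R) (n e m : nat)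
  (X : 'M[R]_(n, e)) (WQ WK : 'M[R]_(e, m)) : 'M[R]_n :=
  (Num.sqrt dk)^-1 *: ((X *m WQ) *m (X *m WK)^T).

Definition is_row_max (R : numDomainType) (n : nat) (M : 'M[R]_n) (i j : 'I_n) : Prop :=
  forall k : 'I_n, M i k <= M i j.

Definition node_identifying (R : rcfType) (dk : R) (n e : nat) (X : 'M[R]_(n, e)) : Prop :=
  exists m : nat, exists WQ WK : 'M[R]_(e, m),
    forall i j : 'I_n, is_row_max (attn_scores dk X WQ WK) i j <-> i = j.

Definition adjacency_identifying (R : rcfType) (dk : R) (n e : nat)
  (G : rel 'I_n) (X : 'M[R]_(n, e)) : Prop :=
  exists m : nat, exists WQ WK : 'M[R]_(e, m),
    forall i j : 'I_n, is_row_max (attn_scores dk X WQ WK) i j <-> adjmx R G i j = 1.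

From HB Require Import structures.
From mathcomp Require Import all_boot all_order all_algebra.
Import Order.TTheory GRing.Theory Num.Theory.
Local Open Scope ring_scope.

(* Choosing W^Q = [I; 0] and W^K = [0; W] makes the scores of [P Q] a positive
   multiple of P (Q W)^T, i.e. of L for W = I and of -L for W = -I.  In row i,
   L carries the degree of i (positive, as i is not isolated) on the diagonal
   and -A_ij <= 0 elsewhere, so its maximum is attained at i only.  The row of
   -L has -deg i < 0 on the diagonal and A_ij in {0, 1} elsewhere; since i has
   a neighbour the maximum is 1, attained exactly at the neighbours of i. *)

Lemma is_row_max_scale (R : numDomainType) n (c : R) (M : 'M[R]_n) i j :
  0 < c -> is_row_max (c *: M) i j <-> is_row_max M i j.
Proof. by move=> c_gt0; split=> Mij k; move: (Mij k); rewrite !mxE ler_pM2l. Qed.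

Lemma attn_scores_row_mx (R : rcfType) (dk : R) n d (P Q : 'M[R]_(n, d))
    (W : 'M[R]_d) :
  attn_scores dk (row_mx P Q) (col_mx 1%:M 0) (col_mx 0 W) =
  (Num.sqrt dk)^-1 *: (P *m (Q *m W)^T).
Proof. by rewrite /attn_scores !mul_row_col !mulmx0 mulmx1 addr0 add0r. Qed.

Lemma adjmx_eq1 (R : nzRingType) n (G : rel 'I_n) i j :
  adjmx R G i j = 1 <-> G i j.
Proof. by rewrite mxE; case: (G i j); split=> // /eqP; rewrite eq_sym oner_eq0. Qed.

Lemma laplacianE (R : pzRingType) n (G : rel 'I_n) i j : irreflexive G ->
  laplacian R G i j = if i == j then #|[set k | G i k]|%:R else - (G i j)%:R.
Proof.
by move=> G_irr; rewrite !mxE; case: eqVneq => [->|_]; rewrite ?G_irr ?subr0 ?sub0r.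
Qed.

Lemma degree_gt0 n (G : rel 'I_n) i :
  (exists j, G i j) -> (0 < #|[set k | G i k]|)%N.
Proof. by case=> j Gij; apply/card_gt0P; exists j; rewrite inE. Qed.

Section RowMaxLaplacian.

Variables (R : numDomainType) (n : nat) (G : rel 'I_n).
Hypothesis G_simple : simple_graph G.

Lemma is_row_max_laplacian i j : is_row_max (laplacian R G) i j <-> i = j.
Proof.
have [_ G_irr G_noiso] := G_simple.
split=> [Mij|<- k]; last first.
  rewrite !laplacianE // eqxx; case: eqVneq => // _.
  by apply: le_trans (ler0n _ _); rewrite oppr_le0 ler0n.
apply/eqP; apply: contraT => neq_ij; move: (Mij i).
rewrite !laplacianE // eqxx (negbTE neq_ij) lt_geF // (@le_lt_trans _ _ 0) //.
  by rewrite oppr_le0 ler0n.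
by rewrite ltr0n degree_gt0.
Qed.

Lemma is_row_max_opp_laplacian i j : is_row_max (- laplacian R G) i j <-> G i j.
Proof.
have [_ G_irr G_noiso] := G_simple.
have oppLE k : (- laplacian R G) i k =
    if i == k then - #|[set l | G i l]|%:R else (G i k)%:R.
  by rewrite mxE laplacianE //; case: eqVneq; rewrite ?opprK.
have neq_of_edge k : G i k -> (i == k) = false.
  by apply: contraTF => /eqP <-; rewrite G_irr.
split=> [Mij|Gij k].
  have [k Gik] := G_noiso i; move: (Mij k).
  rewrite !oppLE (neq_of_edge k) // Gik; case: eqVneq => _.
    by rewrite lt_geF // (@le_lt_trans _ _ 0) // oppr_le0 ler0n.
  by case: (G i j); rewrite ?ler10.
rewrite !oppLE (neq_of_edge j) // Gij; case: eqVneq => _.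
  by apply: le_trans ler01; rewrite oppr_le0 ler0n.
by case: (G i k); rewrite ?ler01.
Qed.

End RowMaxLaplacian.

Theorem lemmaF8 (R : rcfType) (dk : R) (n d : nat) (G : rel 'I_n)
  (P Q : 'M[R]_(n, d)) :
  0 < dk -> simple_graph G ->
  laplacian R G = P *m Q^T ->
  node_identifying dk (row_mx P Q) /\ adjacency_identifying dk G (row_mx P Q).
Proof.
move=> dk_gt0 G_simple L_PQ.
have c_gt0 : 0 < (Num.sqrt dk)^-1 by rewrite invr_gt0 sqrtr_gt0.
split.
  exists d, (col_mx 1%:M 0), (col_mx 0 1%:M) => i j.
  rewrite attn_scores_row_mx mulmx1 -L_PQ.
  apply: iff_trans (is_row_max_scale _ _ _ _ i j c_gt0) _.
  exact: is_row_max_laplacian.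
exists d, (col_mx 1%:M 0), (col_mx 0 (- 1%:M)) => i j.
rewrite attn_scores_row_mx mulmxN mulmx1 linearN /= mulmxN -L_PQ.
apply: iff_trans (is_row_max_scale _ _ _ _ i j c_gt0) _.
apply: iff_trans (is_row_max_opp_laplacian _ _ _ G_simple i j) _.
by apply: iff_sym; apply: adjmx_eq1.
Qed.
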